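(* Let $V$ be a Möbius MOSVA and $(W,Y_W^L,\rho_W)$ a Möbius left $V$-module. For every $n\ge1$, $u_1,\dots,u_n\in V$, $w\in W$, $w'\in W'$, the series $\langle w',Y_W^o(u_n,z_n)\cdots Y_W^o(u_1,z_1)w\rangle$ converges absolutely when $|z_1|>\cdots>|z_n|>0$ to a rational function with the only possible poles at $z_i=0$ ($i=1,\dots,n$) and $z_i=z_j$ ($1\le i<j\le n$).
   Context: Conventions: $x$ formal variable, $z$'s complex; products of vertex operators paired with a dual vector denote the multiple complex series of coefficients times monomials. A meromorphic open-string vertex algebra (MOSVA) is a $\mathbb Z$-graded vector space $V=\coprod_{n\in\mathbb Z}V_{(n)}$ with a linear map $Y_V:V\otimes V\to V[[x,x^{-1}]]$ and a vacuum $\mathbf 1\in V$ such that: (i) $V_{(n)}=0$ for $n$ sufficiently negative; with $\mathbf d_Vv=nv$ for $v\in V_{(n)}$, $[\mathbf d_V,Y_V(v,x)]=x\frac{d}{dx}Y_V(v,x)+Y_V(\mathbf d_Vv,x)$; (ii) $Y_V(\mathbf 1,x)=1_V$, $Y_V(u,x)\mathbf 1\in V[[x]]$ and $\lim_{x\to0}Y_V(u,x)\mathbf 1=u$; (iii) with $D_Vv=\lim_{x\to0}\frac{d}{dx}Y_V(v,x)\mathbf 1$, $\frac{d}{dx}Y_V(v,x)=Y_V(D_Vv,x)=[D_V,Y_V(v,x)]$; (iv) rationality: with $V'=\coprod_nV_{(n)}^*$, for all $u_1,\dots,u_n,v\in V$, $v'\in V'$, $\langle v',Y_V(u_1,z_1)\cdots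 Y_V(u_n,z_n)v\rangle$ converges absolutely for $|z_1|>\cdots>|z_n|>0$ to a rational function with only possible poles at $z_i=0$, $z_i=z_j$ ($i\ne j$), and $\langle v',Y_V(Y_V(u_1,z_1-z_2)u_2,z_2)v\rangle$ converges absolutely for $|z_2|>|z_1-z_2|>0$ to a rational function with only possible poles at $z_1=0,z_2=0,z_1=z_2$; (v) associativity: these two agree for $|z_1|>|z_2|>|z_1-z_2|>0$. A Möbius MOSVA is a MOSVA with a representation $\rho_V$ of $\mathfrak{sl}(2)$ (basis $L_{-1},L_0,L_1$, $[L_0,L_{\pm1}]=\mp L_{\pm1}$, $[L_{-1},L_1]=-2L_0$) with $L_V(0)=\rho_V(L_0)=\mathbf d_V$, $L_V(-1)=\rho_V(L_{-1})=D_V$, $L_V(1)=\rho_V(L_1)$, and $[L_V(1),Y_V(u,x)]=Y_V(L_V(1)u,x)+2xY_V(L_V(0)u,x)+x^2Y_V(L_V(-1)u,x)$ for $u\in V$. ($L_V(1)$ lowers weight by $1$ and is locally nilpotent.) A left $V$-module is a $\mathbb C$-graded vector space $W=\coprod_{m\in\mathbb C}W_{[m]}$ with a linear map $Y_W^L:V\otimes W\to W[[x,x^{-1}]]$, an operator $\mathbf d_W$ of weight $0$ and an operator $D_W$ of weight $1$ such that: (i) $W_{[m]}=0$ when $\mathrm{Re}(m)$ is sufficiently negative; $\mathbf d_Ww=mw$ for $w\in W_{[m]}$; $[\mathbf d_W,Y_W^L(u,x)]=Y_W^L(\mathbf d_Vu,x)+x\frac{d}{dx}Y_W^L(u,x)$;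 (ii) $Y_W^L(\mathbf 1,x)=1_W$; (iii) $\frac{d}{dx}Y_W^L(u,x)=Y_W^L(D_Vu,x)=[D_W,Y_W^L(u,x)]$; (iv) rationality: with $W'=\coprod_mW_{[m]}^*$, for $u_1,\dots,u_n\in V$, $w\in W$, $w'\in W'$, $\langle w',Y_W^L(u_1,z_1)\cdots Y_W^L(u_n,z_n)w\rangle$ converges absolutely for $|z_1|>\cdots>|z_n|>0$ to a rational function with only possible poles at $z_i=0$ and $z_i=z_j$ ($i\neq j$), and $\langle w',Y_W^L(Y_V(u_1,z_1-z_2)u_2,z_2)w\rangle$ converges absolutely for $|z_2|>|z_1-z_2|>0$ to a rational function with only possible poles at $z_1=0,z_2=0,z_1=z_2$; (v) associativity: $\langle w',Y_W^L(u_1,z_1)Y_W^L(u_2,z_2)w\rangle=\langle w',Y_W^L(Y_V(u_1,z_1-z_2)u_2,z_2)w\rangle$ for $|z_1|>|z_2|>|z_1-z_2|>0$. A Möbius left $V$-module $(W,Y_W^L,\rho_W)$ is a left $V$-module with a representation $\rho_W$ of $\mathfrak{sl}(2)$ on $W$ with $L_W(j)=\rho_W(L_j)$, $L_W(-1)=D_W$, such that for $u\in V$: $[L_W(0),Y_W^L(u,x)]=Y_W^L(L_V(0)u,x)+xY_W^L(L_V(-1)u,x)$, $[L_W(1),Y_W^L(u,x)]=Y_W^L(L_V(1)u,x)+2xY_W^L(L_V(0)u,x)+x^2Y_W^L(L_V(-1)u,x)$, and for every $w\in W_{[n]}$ there is $m\in\mathbb N$ with $(L_W(0)-n)^mw=0$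 (so $\mathbf d_W$ is the semisimple part of $L_W(0)$). The opposite vertex operator is $Y_W^o(u,x)=Y_W^L(e^{xL_V(1)}(-x^{-2})^{L_V(0)}u,x^{-1})$; for homogeneous $u$ this equals $\sum_{m\ge0}\frac{(-1)^{\mathrm{wt}\,u}}{m!}x^{m-2\mathrm{wt}\,u}Y_W^L(L_V(1)^mu,x^{-1})$, a finite sum. *)

From Stdlib Require Import Reals ZArith List.
Import ListNotations.
Open Scope R_scope.

Definition CC : Type := (R * R)%type.
Definition RtoC (r : R) : CC := (r, 0).
Definition C0 : CC := (0, 0).
Definition C1 : CC := (1, 0).
Definition Cre (z : CC) : R := fst z.
Definition Cim (z : CC) : R := snd z.
Definition Cadd (a b : CC) : CC := (fst a + fst b, snd a + snd b).
Definition Copp (a : CC) : CC := (- fst a, - snd a).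
Definition Csub (a b : CC) : CC := Cadd a (Copp b).
Definition Cmul (a b : CC) : CC :=
  (fst a * fst b - snd a * snd b, fst a * snd b + snd a * fst b).
Definition Cnorm (a : CC) : R := sqrt (fst a * fst a + snd a * snd a).
Definition Cinv (a : CC) : CC :=
  let d := fst a * fst a + snd a * snd a in (fst a / d, - snd a / d).
Definition Cdiv (a b : CC) : CC := Cmul a (Cinv b).
Fixpoint Cpow (z : CC) (n : nat) : CC :=
  match n with O => C1 | S m => Cmul z (Cpow z m) end.
Definition Cpowz (z : CC) (k : Z) : CC :=
  match k with
  | Z0 => C1
  | Zpos p => Cpow z (Pos.to_nat p)
  | Zneg p => Cpow (Cinv z) (Pos.to_nat p)
  end.
Definition IZC (k : Z) : CC := RtoC (IZR k).
Definition sumC (l : list CC) : CC := fold_right Cadd C0 l.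
Definition prodC (l : list CC) : CC := fold_right Cmul C1 l.
Definition sumR (l : list R) : R := fold_right Rplus 0 l.

(* (unordered absolute summability over Z^n)                           *)

Definition idx_ok (n : nat) (F : list (list Z)) : Prop :=
  NoDup F /\ Forall (fun k => length k = n) F.

Definition abs_summable_to (n : nat) (a : list Z -> CC) (S : CC) : Prop :=
  (exists M : R, forall F, idx_ok n F -> sumR (map (fun k => Cnorm (a k)) F) <= M) /\
  (forall eps : R, 0 < eps -> exists F0, idx_ok n F0 /\
     forall F, idx_ok n F -> incl F0 F -> Cnorm (Csub (sumC (map a F)) S) < eps).

Fixpoint monom (z : list CC) (k : list Z) : CC :=
  match z, k with
  | z0 :: z', k0 :: k' => Cmul (Cpowz z0 k0) (monom z' k')
  | _, _ => C1
  end.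

Definition mseries_conv (n : nat) (c : list Z -> CC) (z : list CC) (S : CC) : Prop :=
  abs_summable_to n (fun k => Cmul (c k) (monom z k)) S.

(* Rational functions in z_1..z_n whose only possible poles are at     *)
(* z_i = 0 and z_i = z_j (i < j): elements of                          *)
(* CC[z_1..z_n][z_i^{-1}, (z_i - z_j)^{-1}]                             *)

Definition zz (z : list CC) (i : nat) : CC := nth i z C0.

(* polynomials in n variables: finite lists of (coefficient, exponent vector) *)
Definition mpoly : Type := list (CC * list nat).
Fixpoint monom_nat (z : list CC) (e : list nat) : CC :=
  match z, e with
  | z0 :: z', e0 :: e' => Cmul (Cpow z0 e0) (monom_nat z' e')
  | _, _ => C1
  end.
Definition peval (P : mpoly) (z : list CC) : CC :=
  sumC (map (fun t => Cmul (fst t) (monom_nat z (snd t))) P).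

Definition pairs_lt (n : nat) : list (nat * nat) :=
  flat_map (fun i => map (fun j => (i, j)) (seq (S i) (n - S i))) (seq 0 n).

Definition pole_den (n N : nat) (z : list CC) : CC :=
  Cmul (prodC (map (fun i => Cpow (zz z i) N) (seq 0 n)))
       (prodC (map (fun ij => Cpow (Csub (zz z (fst ij)) (zz z (snd ij))) N) (pairs_lt n))).

Definition off_poles (n : nat) (z : list CC) : Prop :=
  length z = n /\
  (forall i, (i < n)%nat -> zz z i <> C0) /\
  (forall i j, (i < j)%nat -> (j < n)%nat -> zz z i <> zz z j).

Definition rational_poles (n : nat) (f : list CC -> CC) : Prop :=
  exists (P : mpoly) (N : nat),
    forall z, off_poles n z -> f z = Cdiv (peval P z) (pole_den n N z).

Definition dec_region (n : nat) (z : list CC) : Prop :=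
  length z = n /\
  (forall i, (i < n)%nat -> 0 < Cnorm (zz z i)) /\
  (forall i, (S i < n)%nat -> Cnorm (zz z (S i)) < Cnorm (zz z i)).

Record VS := {
  vcar :> Type;
  vzero : vcar;
  vadd : vcar -> vcar -> vcar;
  vopp : vcar -> vcar;
  vscal : CC -> vcar -> vcar;
  vaddA : forall x y z, vadd x (vadd y z) = vadd (vadd x y) z;
  vaddC : forall x y, vadd x y = vadd y x;
  vadd0 : forall x, vadd vzero x = x;
  vaddN : forall x, vadd (vopp x) x = vzero;
  vscal1 : forall x, vscal C1 x = x;
  vscalA : forall a b x, vscal a (vscal b x) = vscal (Cmul a b) x;
  vscalDv : forall a x y, vscal a (vadd x y) = vadd (vscal a x) (vscal a y);
  vscalDs : forall a b x, vscal (Cadd a b) x = vadd (vscal a x) (vscal b x)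
}.
Arguments vzero {_}.
Arguments vadd {_} _ _.
Arguments vopp {_} _.
Arguments vscal {_} _ _.

Definition vsub {V : VS} (x y : V) : V := vadd x (vopp y).
Definition vsum {V : VS} (l : list V) : V := fold_right vadd vzero l.

Definition linear {V W : VS} (f : V -> W) : Prop :=
  (forall x y, f (vadd x y) = vadd (f x) (f y)) /\
  (forall a x, f (vscal a x) = vscal a (f x)).

Definition linearC {V : VS} (f : V -> CC) : Prop :=
  (forall x y, f (vadd x y) = Cadd (f x) (f y)) /\
  (forall a x, f (vscal a x) = Cmul a (f x)).

(* Graded vector spaces  V = coprod_{i in I} V_(i), given by the        *)
(* family of projections onto the homogeneous components               *)

Record graded (I : Type) (V : VS) := {
  proj : I -> V -> V;
  supp : V -> list I;
  proj_lin : forall i, linear (proj i);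
  proj_idem : forall i v, proj i (proj i v) = proj i v;
  proj_orth : forall i j v, i <> j -> proj i (proj j v) = vzero;
  supp_nodup : forall v, NoDup (supp v);
  supp_spec : forall i v, ~ In i (supp v) -> proj i v = vzero;
  decomp : forall v, v = vsum (map (fun i => proj i v) (supp v))
}.
Arguments proj {_ _} _ _ _.
Arguments supp {_ _} _ _.

Definition homog {I} {V : VS} (g : graded I V) (i : I) (v : V) : Prop := proj g i v = v.

(* graded dual V' = coprod_i V_(i)^* : linear functionals vanishing on all but
   finitely many homogeneous components *)
Definition gdual {I} {V : VS} (g : graded I V) (f : V -> CC) : Prop :=
  linearC f /\ exists l : list I, forall i v, ~ In i l -> f (proj g i v) = C0.

(* MOSVAs.  A vertex operator Y(u,x)v in V[[x,x^{-1}]] is encoded by    *)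
(* its coefficients:  Y u v k = coefficient of x^k.                    *)

Record mosva_data := {
  mV : VS;
  mgr : graded Z mV;
  mlow : Z;                         (* V_(n) = 0 for n < mlow *)
  mY : mV -> mV -> Z -> mV;
  mvac : mV;
  mL_m1 : mV -> mV;
  mL_0 : mV -> mV;
  mL_1 : mV -> mV
}.

Definition dV (V : mosva_data) (v : mV V) : mV V :=
  vsum (map (fun n => vscal (IZC n) (proj (mgr V) n v)) (supp (mgr V) v)).

(* D_V v = lim_{x->0} d/dx Y(v,x)1 = coefficient of x^1 in Y(v,x)1 *)
Definition DV (V : mosva_data) (v : mV V) : mV V := mY V v (mvac V) 1%Z.

(* Y(u_1,z_1) ... Y(u_n,z_n) v : coefficient of z_1^{k_1} ... z_n^{k_n} *)
Fixpoint prodY {V : VS} {A : VS} (Y : A -> V -> Z -> V) (us : list A) (ks : list Z) (v : V) : V :=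
  match us, ks with
  | u :: us', k :: ks' => Y u (prodY Y us' ks' v) k
  | _, _ => v
  end.

Definition is_MOSVA (V : mosva_data) : Prop :=
  let Y := mY V in let g := mgr V in let one := mvac V in
  (forall v k, linear (fun u => Y u v k)) /\
  (forall u k, linear (fun v => Y u v k)) /\
  (forall n v, (n < mlow V)%Z -> proj g n v = vzero) /\
  (* (i) [d_V, Y(v,x)] = x d/dx Y(v,x) + Y(d_V v, x) *)
  (forall u v k, vsub (dV V (Y u v k)) (Y u (dV V v) k)
                 = vadd (vscal (IZC k) (Y u v k)) (Y (dV V u) v k)) /\
  (forall v k, Y one v k = if Z.eqb k 0 then v else vzero) /\
  (forall u k, (k < 0)%Z -> Y u one k = vzero) /\
  (forall u, Y u one 0%Z = u) /\
  (forall u v k, vscal (IZC (k + 1)%Z) (Y u v (k + 1)%Z) = Y (DV V u) v k) /\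
  (forall u v k, vsub (DV V (Y u v k)) (Y u (DV V v) k) = Y (DV V u) v k) /\
  (forall (us : list (mV V)) (v : mV V) (v' : mV V -> CC), (1 <= length us)%nat -> gdual g v' ->
     exists f, rational_poles (length us) f /\
       forall z, dec_region (length us) z ->
         mseries_conv (length us) (fun ks => v' (prodY Y us ks v)) z (f z)) /\
  (forall (u1 u2 v : mV V) (v' : mV V -> CC), gdual g v' ->
     exists f, rational_poles 2 f /\
       forall z1 z2, 0 < Cnorm (Csub z1 z2) -> Cnorm (Csub z1 z2) < Cnorm z2 ->
         mseries_conv 2 (fun ks => v' (Y (Y u1 u2 (nth 0 ks 0%Z)) v (nth 1 ks 0%Z)))
           [Csub z1 z2; z2] (f [z1; z2])) /\
  (forall (u1 u2 v : mV V) (v' : mV V -> CC), gdual g v' ->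
     forall z1 z2 S1 S2,
       Cnorm z2 < Cnorm z1 -> 0 < Cnorm (Csub z1 z2) -> Cnorm (Csub z1 z2) < Cnorm z2 ->
       mseries_conv 2 (fun ks => v' (prodY Y [u1; u2] ks v)) [z1; z2] S1 ->
       mseries_conv 2 (fun ks => v' (Y (Y u1 u2 (nth 0 ks 0%Z)) v (nth 1 ks 0%Z)))
           [Csub z1 z2; z2] S2 ->
       S1 = S2).

Definition sl2_rep {V : VS} (Lm1 L0 L1 : V -> V) : Prop :=
  linear Lm1 /\ linear L0 /\ linear L1 /\
  (forall v, vsub (L0 (Lm1 v)) (Lm1 (L0 v)) = Lm1 v) /\
  (forall v, vsub (L0 (L1 v)) (L1 (L0 v)) = vopp (L1 v)) /\
  (forall v, vsub (Lm1 (L1 v)) (L1 (Lm1 v)) = vscal (RtoC (-2)) (L0 v)).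

Definition is_Mobius_MOSVA (V : mosva_data) : Prop :=
  is_MOSVA V /\
  sl2_rep (mL_m1 V) (mL_0 V) (mL_1 V) /\
  (forall v, mL_0 V v = dV V v) /\
  (forall v, mL_m1 V v = DV V v) /\
  (* [L_V(1), Y(u,x)] = Y(L(1)u,x) + 2x Y(L(0)u,x) + x^2 Y(L(-1)u,x) *)
  (forall u v k, vsub (mL_1 V (mY V u v k)) (mY V u (mL_1 V v) k)
     = vadd (mY V (mL_1 V u) v k)
         (vadd (vscal (RtoC 2) (mY V (mL_0 V u) v (k - 1)%Z))
               (mY V (mL_m1 V u) v (k - 2)%Z))).

Record lmod_data (V : mosva_data) := {
  wW : VS;
  wgr : graded CC wW;
  wY : mV V -> wW -> Z -> wW;        (* Y_W^L, coefficient of x^k *)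
  wd : wW -> wW;
  wD : wW -> wW;
  wL_m1 : wW -> wW;
  wL_0 : wW -> wW;
  wL_1 : wW -> wW
}.
Arguments wW {_} _.
Arguments wgr {_} _.
Arguments wY {_} _ _ _ _.
Arguments wd {_} _ _.
Arguments wD {_} _ _.
Arguments wL_m1 {_} _ _.
Arguments wL_0 {_} _ _.
Arguments wL_1 {_} _ _.

Definition is_left_module (V : mosva_data) (W : lmod_data V) : Prop :=
  let Y := wY W in let g := wgr W in
  (forall w k, linear (fun u => Y u w k)) /\
  (forall u k, linear (fun w => Y u w k)) /\
  linear (wd W) /\ linear (wD W) /\
  (forall m w, homog g m w -> homog g m (wd W w)) /\
  (forall m w, homog g m w -> homog g (Cadd m C1) (wD W w)) /\
  (exists N : R, forall m w, Cre m < N -> proj g m w = vzero) /\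
  (forall m w, homog g m w -> wd W w = vscal m w) /\
  (forall u w k, vsub (wd W (Y u w k)) (Y u (wd W w) k)
                 = vadd (Y (dV V u) w k) (vscal (IZC k) (Y u w k))) /\
  (forall w k, Y (mvac V) w k = if Z.eqb k 0 then w else vzero) /\
  (forall u w k, vscal (IZC (k + 1)%Z) (Y u w (k + 1)%Z) = Y (DV V u) w k) /\
  (forall u w k, vsub (wD W (Y u w k)) (Y u (wD W w) k) = Y (DV V u) w k) /\
  (forall (us : list (mV V)) (w : wW W) (w' : wW W -> CC), (1 <= length us)%nat -> gdual g w' ->
     exists f, rational_poles (length us) f /\
       forall z, dec_region (length us) z ->
         mseries_conv (length us) (fun ks => w' (prodY Y us ks w)) z (f z)) /\
  (forall (u1 u2 : mV V) (w : wW W) (w' : wW W -> CC), gdual g w' ->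
     exists f, rational_poles 2 f /\
       forall z1 z2, 0 < Cnorm (Csub z1 z2) -> Cnorm (Csub z1 z2) < Cnorm z2 ->
         mseries_conv 2 (fun ks => w' (Y (mY V u1 u2 (nth 0 ks 0%Z)) w (nth 1 ks 0%Z)))
           [Csub z1 z2; z2] (f [z1; z2])) /\
  (forall (u1 u2 : mV V) (w : wW W) (w' : wW W -> CC), gdual g w' ->
     forall z1 z2 S1 S2,
       Cnorm z2 < Cnorm z1 -> 0 < Cnorm (Csub z1 z2) -> Cnorm (Csub z1 z2) < Cnorm z2 ->
       mseries_conv 2 (fun ks => w' (prodY Y [u1; u2] ks w)) [z1; z2] S1 ->
       mseries_conv 2 (fun ks => w' (Y (mY V u1 u2 (nth 0 ks 0%Z)) w (nth 1 ks 0%Z)))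
           [Csub z1 z2; z2] S2 ->
       S1 = S2).

Definition is_Mobius_left_module (V : mosva_data) (W : lmod_data V) : Prop :=
  is_left_module V W /\
  sl2_rep (wL_m1 W) (wL_0 W) (wL_1 W) /\
  (forall w, wL_m1 W w = wD W w) /\
  (forall u w k, vsub (wL_0 W (wY W u w k)) (wY W u (wL_0 W w) k)
     = vadd (wY W (mL_0 V u) w k) (wY W (mL_m1 V u) w (k - 1)%Z)) /\
  (forall u w k, vsub (wL_1 W (wY W u w k)) (wY W u (wL_1 W w) k)
     = vadd (wY W (mL_1 V u) w k)
         (vadd (vscal (RtoC 2) (wY W (mL_0 V u) w (k - 1)%Z))
               (wY W (mL_m1 V u) w (k - 2)%Z))) /\
  (forall (n : CC) w, homog (wgr W) n w ->
     exists m : nat, Nat.iter m (fun x => vsub (wL_0 W x) (vscal n x)) w = vzero).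

(*   Y_W^o(u,x) = Y_W^L(e^{x L_V(1)} (-x^{-2})^{L_V(0)} u, x^{-1})       *)
(* For u of weight p this is                                           *)
(*   sum_{m>=0} (-1)^p/m! x^{m-2p} Y_W^L(L_V(1)^m u, x^{-1}),            *)
(* the sum being finite: L_V(1)^m u has weight p-m, so vanishes for    *)
(* m > p - mlow.  General u is split into homogeneous components.      *)
(* Yo u w k = coefficient of x^k in Y_W^o(u,x)w.                        *)

Definition signZ (p : Z) : CC := if Z.even p then C1 else RtoC (-1).

Definition Yo (V : mosva_data) (W : lmod_data V) (u : mV V) (w : wW W) (k : Z) : wW W :=
  vsum (flat_map (fun p =>
          map (fun m =>
                 vscal (Cmul (signZ p) (RtoC (/ INR (fact m))))
                   (wY W (Nat.iter m (mL_1 V) (proj (mgr V) p u)) w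
                      (- (k - Z.of_nat m + 2 * p))%Z))
              (seq 0 (S (Z.to_nat (p - mlow V)))))
        (supp (mgr V) u)).

(* Y_W^o(u_n,z_n) ... Y_W^o(u_1,z_1) w, for us = [u_1; ...; u_n]:
   coefficient of z_1^{k_1} ... z_n^{k_n}, ks = [k_1; ...; k_n] *)
Fixpoint prodYo_rev (V : mosva_data) (W : lmod_data V)
    (us : list (mV V)) (ks : list Z) (w : wW W) : wW W :=
  match us, ks with
  | u :: us', k :: ks' => prodYo_rev V W us' ks' (Yo V W u w k)
  | _, _ => w
  end.

(* Each component of Y_W^o(u,z) is a finite sum of terms z^(m-2p) Y_W^L(a, 1/z),
   so the matrix coefficient <w', Y_W^o(u_n,z_n) ... Y_W^o(u_1,z_1) w> is a finite
   linear combination, with Laurent monomials in z as coefficients, of matrix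
   coefficients <w', Y_W^L(a_1,y_1) ... Y_W^L(a_n,y_n) w> at y = (1/z_n, ..., 1/z_1).
   Inversion maps the region |z_1| > ... > |z_n| > 0 onto itself, so the rationality
   of products of left vertex operators applies; and a rational function with poles
   only at y_i = 0 and y_i = y_j stays of that kind in z, because
   1/z_a - 1/z_b = (z_b - z_a) / (z_a z_b).  Besides the definition of Y_W^o, only the
   linearity of Y_W^L and this rationality axiom are needed. *)

From Stdlib Require Import Reals ZArith List.
From Stdlib Require Import Lra Lia Psatz.
From Coquelicot Require Complex.
Import ListNotations.
Open Scope R_scope.

Lemma CC_ext (a b : CC) : fst a = fst b -> snd a = snd b -> a = b.
Proof. destruct a, b; simpl; intros; subst; reflexivity. Qed.

Lemma CC_ring : ring_theory C0 C1 Cadd Cmul Csub Copp (@eq CC).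
Proof.
  constructor; intros; apply CC_ext;
  repeat match goal with x : CC |- _ => destruct x end;
  unfold C0, C1, Cadd, Cmul, Csub, Copp; simpl; ring.
Qed.
Add Ring CCring : CC_ring.

Lemma C1_neq0 : C1 <> C0.
Proof. unfold C0, C1; intro H; injection H; lra. Qed.

Lemma CC_field : field_theory C0 C1 Cadd Cmul Csub Copp Cdiv Cinv (@eq CC).
Proof.
  constructor.
  - exact CC_ring.
  - exact C1_neq0.
  - reflexivity.
  - intros [a b] Hab.
    assert (a * a + b * b <> 0).
    { intro H; apply Hab; assert (a = 0) by nra; assert (b = 0) by nra; subst; reflexivity. }
    apply CC_ext; unfold Cmul, Cinv, C1; simpl; field; auto.
Qed.
Add Field CCfield : CC_field.

Lemma CC_eq_dec (a b : CC) : {a = b} + {a <> b}.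
Proof.
  destruct a as [a1 a2], b as [b1 b2].
  destruct (Req_EM_T a1 b1), (Req_EM_T a2 b2); subst; auto;
  right; intro H; injection H; auto.
Qed.

Lemma Cinv_C0 : Cinv C0 = C0.
Proof. apply CC_ext; unfold Cinv, C0; simpl; unfold Rdiv; rewrite ?Rmult_0_l; ring. Qed.

Lemma Cmul_neq0 a b : a <> C0 -> b <> C0 -> Cmul a b <> C0.
Proof.
  intros Ha Hb H; apply Hb.
  replace b with (Cmul (Cinv a) (Cmul a b)) by (field; auto).
  rewrite H; ring.
Qed.

Lemma Cinv_neq0 a : a <> C0 -> Cinv a <> C0.
Proof.
  intros Ha H; apply C1_neq0.
  replace C1 with (Cmul (Cinv a) a) by (field; auto).
  rewrite H; ring.
Qed.

Lemma CinvM a b : Cinv (Cmul a b) = Cmul (Cinv a) (Cinv b).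
Proof.
  destruct (CC_eq_dec a C0) as [->|Ha].
  { replace (Cmul C0 b) with C0 by ring; rewrite Cinv_C0; ring. }
  destruct (CC_eq_dec b C0) as [->|Hb].
  { replace (Cmul a C0) with C0 by ring; rewrite Cinv_C0; ring. }
  field; auto.
Qed.

Lemma CinvK a : Cinv (Cinv a) = a.
Proof.
  destruct (CC_eq_dec a C0) as [->|Ha]; [rewrite !Cinv_C0; reflexivity|].
  field; split; [exact Ha | exact C1_neq0].
Qed.

Lemma Cinv_inj a b : Cinv a = Cinv b -> a = b.
Proof. intro H; rewrite <- (CinvK a), <- (CinvK b), H; reflexivity. Qed.

Lemma Cinv1 : Cinv C1 = C1.
Proof. field; exact C1_neq0. Qed.

Lemma Csub_eq0 a b : Csub a b = C0 -> a = b.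
Proof. intro H; transitivity (Cadd (Csub a b) b); [ring|rewrite H; ring]. Qed.

Lemma Cnorm_Cmod x : Cnorm x = Complex.Cmod x.
Proof. unfold Cnorm, Complex.Cmod; f_equal; simpl; ring. Qed.

Lemma Cnorm_triangle x y : Cnorm (Cadd x y) <= Cnorm x + Cnorm y.
Proof. rewrite !Cnorm_Cmod; apply Complex.Cmod_triangle. Qed.

Lemma CnormM x y : Cnorm (Cmul x y) = Cnorm x * Cnorm y.
Proof. rewrite !Cnorm_Cmod; apply (Complex.Cmod_mult x y). Qed.

Lemma Cnorm_ge0 x : 0 <= Cnorm x.
Proof. apply sqrt_pos. Qed.

Lemma Cnorm0 : Cnorm C0 = 0.
Proof. unfold Cnorm, C0; simpl; rewrite Rmult_0_l, Rplus_0_l; apply sqrt_0. Qed.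

Lemma Cnorm_gt0_neq0 x : 0 < Cnorm x -> x <> C0.
Proof. intros H ->; rewrite Cnorm0 in H; lra. Qed.

Lemma CnormV x : Cnorm (Cinv x) = / Cnorm x.
Proof.
  destruct (CC_eq_dec x C0) as [->|Hx]; [rewrite Cinv_C0, Cnorm0, Rinv_0; reflexivity|].
  assert (H : Cnorm (Cinv x) * Cnorm x = 1).
  { rewrite <- CnormM; replace (Cmul (Cinv x) x) with C1 by (field; auto).
    unfold Cnorm, C1; simpl; replace (1 * 1 + 0 * 0) with 1 by ring; apply sqrt_1. }
  assert (Cnorm x <> 0) by (intro E; rewrite E in H; lra).
  apply (Rmult_eq_reg_r (Cnorm x)); auto; rewrite H, Rinv_l; auto.
Qed.

Lemma CpowD z a b : Cpow z (a + b) = Cmul (Cpow z a) (Cpow z b).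
Proof. induction a; simpl; [ring | rewrite IHa; ring]. Qed.

Lemma CpowMn x y n : Cpow (Cmul x y) n = Cmul (Cpow x n) (Cpow y n).
Proof. induction n; simpl; [ring | rewrite IHn; ring]. Qed.

Lemma CpowM x a b : Cpow x (a * b) = Cpow (Cpow x a) b.
Proof.
  induction b; simpl; [rewrite Nat.mul_0_r; reflexivity|].
  rewrite Nat.mul_succ_r, Nat.add_comm, CpowD, IHb; ring.
Qed.

Lemma CpowV x n : Cpow (Cinv x) n = Cinv (Cpow x n).
Proof. induction n; simpl; [symmetry; apply Cinv1 | rewrite CinvM, IHn; reflexivity]. Qed.

Lemma Cpow_neq0 x n : x <> C0 -> Cpow x n <> C0.
Proof. intro H; induction n; simpl; [apply C1_neq0 | apply Cmul_neq0; auto]. Qed.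

Lemma Cpow1 n : Cpow C1 n = C1.
Proof. induction n; simpl; [reflexivity | rewrite IHn; ring]. Qed.

Lemma CpowzS z k : z <> C0 -> Cpowz z (Z.succ k) = Cmul z (Cpowz z k).
Proof.
  intro Hz; destruct k as [|p|p]; simpl.
  - ring.
  - rewrite Pos2Nat.inj_add, Nat.add_comm; reflexivity.
  - destruct (Pos.succ_pred_or p) as [->|Hp]; simpl; [field; auto|].
    rewrite <- Hp, Z.pos_sub_lt by lia.
    replace (Pos.succ (Pos.pred p) - 1)%positive with (Pos.pred p) by lia.
    simpl; rewrite Pos2Nat.inj_succ; simpl; field; auto.
Qed.

Lemma CpowzD z a b : z <> C0 -> Cpowz z (a + b) = Cmul (Cpowz z a) (Cpowz z b).
Proof.
  intro Hz; induction b using Z.peano_ind.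
  - rewrite Z.add_0_r; simpl; ring.
  - rewrite Z.add_succ_r, !CpowzS, IHb by auto; ring.
  - assert (E : forall k, Cpowz z (Z.pred k) = Cmul (Cinv z) (Cpowz z k)).
    { intro k; rewrite <- (Z.succ_pred k) at 2; rewrite CpowzS by auto; field; auto. }
    rewrite Z.add_pred_r, !E, IHb; ring.
Qed.

Lemma CpowzV z k : Cpowz (Cinv z) k = Cpowz z (- k).
Proof. destruct k; simpl; auto; rewrite CinvK; reflexivity. Qed.

Lemma sumC_app l1 l2 : sumC (l1 ++ l2) = Cadd (sumC l1) (sumC l2).
Proof. induction l1; simpl; [ring | rewrite IHl1; ring]. Qed.

Lemma prodC_app l1 l2 : prodC (l1 ++ l2) = Cmul (prodC l1) (prodC l2).
Proof. induction l1; simpl; [ring | rewrite IHl1; ring]. Qed.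

Lemma sumC_mulr c l : Cmul c (sumC l) = sumC (map (Cmul c) l).
Proof. induction l; simpl; [ring | rewrite <- IHl; ring]. Qed.

Lemma sumC_mapD {A} (a b : A -> CC) l :
  sumC (map (fun k => Cadd (a k) (b k)) l) = Cadd (sumC (map a l)) (sumC (map b l)).
Proof. induction l; simpl; [ring | rewrite IHl; ring]. Qed.

Lemma prodC_neq0 l : Forall (fun x => x <> C0) l -> prodC l <> C0.
Proof. induction 1; simpl; [apply C1_neq0 | apply Cmul_neq0; auto]. Qed.

Lemma prodC_map1 {A} (f : A -> CC) l : (forall x, In x l -> f x = C1) -> prodC (map f l) = C1.
Proof. induction l; simpl; intros; auto; rewrite H, IHl by auto; ring. Qed.

Lemma prodC_Cpow l N : prodC (map (fun x => Cpow x N) l) = Cpow (prodC l) N.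
Proof. induction l; simpl; [rewrite Cpow1 | rewrite IHl, CpowMn]; reflexivity. Qed.

Lemma prodC_Cinv l : Cinv (prodC l) = prodC (map Cinv l).
Proof. induction l; simpl; [apply Cinv1 | rewrite CinvM, IHl; reflexivity]. Qed.

Lemma prodC_mapM {A} (f g : A -> CC) l :
  prodC (map (fun x => Cmul (f x) (g x)) l) = Cmul (prodC (map f l)) (prodC (map g l)).
Proof. induction l; simpl; [ring | rewrite IHl; ring]. Qed.

Lemma prodC_const {A} c (l : list A) : prodC (map (fun _ => c) l) = Cpow c (length l).
Proof. induction l; simpl; [reflexivity | rewrite IHl; reflexivity]. Qed.

Lemma sumR_map_le {A} (a b : A -> R) l : (forall k, a k <= b k) ->
  sumR (map a l) <= sumR (map b l).
Proof. intro H; induction l; simpl; [lra | specialize (H a0); lra]. Qed.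

Lemma sumR_mapD {A} (a b : A -> R) l :
  sumR (map (fun k => a k + b k) l) = sumR (map a l) + sumR (map b l).
Proof. induction l; simpl; [ring | rewrite IHl; ring]. Qed.

Lemma sumR_mapM {A} c (a : A -> R) l :
  sumR (map (fun k => c * a k) l) = c * sumR (map a l).
Proof. induction l; simpl; [ring | rewrite IHl; ring]. Qed.

Section VectorSpace.
Variable V : VS.

Lemma vaddr0 (x : V) : vadd x vzero = x.
Proof. rewrite vaddC; apply vadd0. Qed.

Lemma vadd_idem_eq0 (x : V) : vadd x x = x -> x = vzero.
Proof.
  intro H; transitivity (vadd (vadd (vopp x) x) x); [rewrite vaddN, vadd0; reflexivity|].
  rewrite <- vaddA, H, vaddN; reflexivity.
Qed.

Lemma vscal0 c : vscal c (@vzero V) = vzero.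
Proof. apply vadd_idem_eq0; rewrite <- vscalDv, vadd0; reflexivity. Qed.

Lemma vsum_app (l1 l2 : list V) : vsum (l1 ++ l2) = vadd (vsum l1) (vsum l2).
Proof. induction l1; simpl; [rewrite vadd0 | rewrite IHl1, vaddA]; reflexivity. Qed.

Lemma vscal_sum c (l : list V) : vscal c (vsum l) = vsum (map (vscal c) l).
Proof. induction l; simpl; [apply vscal0 | rewrite vscalDv, IHl; reflexivity]. Qed.

Lemma vsum_flat_map {A B} (F : B -> V) (G : A -> list B) l :
  vsum (map F (flat_map G l)) = vsum (map (fun t => vsum (map F (G t))) l).
Proof. induction l; simpl; auto; rewrite map_app, vsum_app, IHl; reflexivity. Qed.
End VectorSpace.

Lemma linear_vsum {V W : VS} (f : V -> W) l : linear f -> f (vsum l) = vsum (map f l).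
Proof.
  intros [Ha Hs]; induction l; simpl.
  - apply vadd_idem_eq0; rewrite <- Ha, vadd0; reflexivity.
  - rewrite Ha, IHl; reflexivity.
Qed.

Lemma linearC_vsum {V : VS} (f : V -> CC) l : linearC f -> f (vsum l) = sumC (map f l).
Proof.
  intros [Ha Hs]; induction l; simpl.
  - assert (E : f vzero = Cadd (f vzero) (f vzero)) by (rewrite <- Ha, vadd0; reflexivity).
    transitivity (Csub (Cadd (f vzero) (f vzero)) (f vzero)); [ring | rewrite <- E; ring].
  - rewrite Ha, IHl; reflexivity.
Qed.

Lemma linear_comp {U V W : VS} (f : V -> W) (g : U -> V) :
  linear f -> linear g -> linear (fun x => f (g x)).
Proof. intros [Fa Fs] [Ga Gs]; split; intros; [rewrite Ga, Fa | rewrite Gs, Fs]; reflexivity. Qed.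

Lemma prodY_linear {V A : VS} (Y : A -> V -> Z -> V) :
  (forall u k, linear (fun w => Y u w k)) -> forall us ks, linear (prodY Y us ks).
Proof.
  intros H us; induction us as [|u us IH]; intros [|k ks]; simpl; try (split; reflexivity).
  apply (linear_comp (fun w => Y u w k)); auto.
Qed.

Lemma prodY_rcons {V A : VS} (Y : A -> V -> Z -> V) us ks u k w :
  length us = length ks ->
  prodY Y (us ++ [u]) (ks ++ [k]) w = prodY Y us ks (Y u w k).
Proof.
  revert ks; induction us; intros [|k' ks]; simpl; intros; try lia; auto.
  rewrite IHus by lia; reflexivity.
Qed.

(** * Absolutely summable multiple series *)

Section AbsSummable.
Variable n : nat.

Lemma abs_summable_to_ext a b S : abs_summable_to n a S ->
  (forall k, length k = n -> a k = b k) -> abs_summable_to n b S.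
Proof.
  intros [[M HM] HE] Hab.
  assert (HF : forall F, idx_ok n F -> map b F = map a F).
  { intros F [_ HF]; apply map_ext_in; intros k Hk; symmetry; apply Hab.
    rewrite Forall_forall in HF; auto. }
  split.
  - exists M; intros F HF'; rewrite <- (map_map b Cnorm), HF, map_map by auto; auto.
  - intros eps He; destruct (HE eps He) as [F0 [H0 H1]]; exists F0; split; auto.
    intros F HF' Hi; rewrite HF by auto; auto.
Qed.

Lemma abs_summable_to0 : abs_summable_to n (fun _ => C0) C0.
Proof.
  split.
  - exists 0; intros F _; rewrite Cnorm0; induction F; simpl; lra.
  - intros eps He; exists []; split; [split; constructor|].
    intros F _ _.
    assert (E : sumC (map (fun _ : list Z => C0) F) = C0) by (induction F; simpl; [|rewrite IHF]; ring).
    rewrite E; replace (Csub C0 C0) with C0 by ring; rewrite Cnorm0; auto.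
Qed.

Lemma abs_summable_toD a b S T : abs_summable_to n a S -> abs_summable_to n b T ->
  abs_summable_to n (fun k => Cadd (a k) (b k)) (Cadd S T).
Proof.
  intros [[M1 HM1] HE1] [[M2 HM2] HE2]; split.
  - exists (M1 + M2); intros F HF.
    apply Rle_trans with (sumR (map (fun k => Cnorm (a k) + Cnorm (b k)) F)).
    + apply sumR_map_le; intro; apply Cnorm_triangle.
    + rewrite sumR_mapD; specialize (HM1 F HF); specialize (HM2 F HF); lra.
  - intros eps He.
    destruct (HE1 (eps / 2)) as [F1 [Hok1 H1]]; [lra|].
    destruct (HE2 (eps / 2)) as [F2 [Hok2 H2]]; [lra|].
    exists (nodup (list_eq_dec Z.eq_dec) (F1 ++ F2)); split.
    + split; [apply NoDup_nodup|].
      apply Forall_forall; intros x Hx; apply nodup_In, in_app_or in Hx.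
      destruct Hok1 as [_ Hok1], Hok2 as [_ Hok2]; rewrite Forall_forall in Hok1, Hok2.
      destruct Hx; auto.
    + intros F HF Hi.
      assert (H1F : incl F1 F) by (intros x Hx; apply Hi, nodup_In, in_or_app; auto).
      assert (H2F : incl F2 F) by (intros x Hx; apply Hi, nodup_In, in_or_app; auto).
      specialize (H1 F HF H1F); specialize (H2 F HF H2F).
      rewrite sumC_mapD.
      replace (Csub (Cadd (sumC (map a F)) (sumC (map b F))) (Cadd S T))
        with (Cadd (Csub (sumC (map a F)) S) (Csub (sumC (map b F)) T)) by ring.
      eapply Rle_lt_trans; [apply Cnorm_triangle | lra].
Qed.

Lemma abs_summable_toZ c a S : abs_summable_to n a S ->
  abs_summable_to n (fun k => Cmul c (a k)) (Cmul c S).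
Proof.
  intros [[M HM] HE]; pose proof (Cnorm_ge0 c) as Hc; split.
  - exists (Cnorm c * M); intros F HF.
    rewrite (map_ext _ (fun k => Cnorm c * Cnorm (a k))) by (intro; apply CnormM).
    rewrite sumR_mapM; apply Rmult_le_compat_l; auto.
  - intros eps He.
    destruct (HE (eps / (Cnorm c + 1))) as [F0 [Hok H1]]; [apply Rdiv_lt_0_compat; lra|].
    exists F0; split; auto; intros F HF Hi; specialize (H1 F HF Hi).
    rewrite <- (map_map a (Cmul c)), <- sumC_mulr.
    replace (Csub (Cmul c (sumC (map a F))) (Cmul c S))
      with (Cmul c (Csub (sumC (map a F)) S)) by ring.
    rewrite CnormM; pose proof (Cnorm_ge0 (Csub (sumC (map a F)) S)).
    apply Rle_lt_trans with ((Cnorm c + 1) * Cnorm (Csub (sumC (map a F)) S)); [nra|].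
    apply Rmult_lt_compat_l with (r := Cnorm c + 1) in H1; [|lra].
    replace ((Cnorm c + 1) * (eps / (Cnorm c + 1))) with eps in H1 by (field; lra); exact H1.
Qed.

Lemma abs_summable_to_reindex a S (phi psi : list Z -> list Z) :
  (forall k, length k = n -> length (phi k) = n /\ psi (phi k) = k) ->
  (forall k, length k = n -> length (psi k) = n /\ phi (psi k) = k) ->
  abs_summable_to n a S -> abs_summable_to n (fun k => a (phi k)) S.
Proof.
  intros Hp Hq [[M HM] HE].
  assert (Hmap : forall f g, (forall k, length k = n -> length (f k) = n /\ g (f k) = k) ->
                 forall F, idx_ok n F -> idx_ok n (map f F)).
  { intros f g Hfg F [Hnd Hl]; rewrite Forall_forall in Hl; split.
    - apply NoDup_map_inv with (f := g); rewrite map_map.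
      rewrite (map_ext_in _ (fun x => x)), map_id; auto; intros; apply Hfg; auto.
    - apply Forall_forall; intros x Hx; apply in_map_iff in Hx as [y [<- Hy]]; apply Hfg; auto. }
  split.
  - exists M; intros F HF; specialize (HM _ (Hmap _ _ Hp F HF)); rewrite map_map in HM; auto.
  - intros eps He; destruct (HE eps He) as [F0 [H0 H1]].
    exists (map psi F0); split; [apply (Hmap _ _ Hq); auto|].
    intros F HF Hi; specialize (H1 (map phi F) (Hmap _ _ Hp F HF)); rewrite map_map in H1.
    apply H1; intros x Hx; destruct H0 as [_ H0]; rewrite Forall_forall in H0.
    destruct (Hq x (H0 x Hx)) as [_ E]; rewrite <- E; apply in_map, Hi, in_map; auto.
Qed.
End AbsSummable.

Fixpoint zsub (ss ks : list Z) : list Z :=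
  match ss, ks with
  | s :: ss', k :: ks' => (s - k)%Z :: zsub ss' ks'
  | _, _ => []
  end.

Lemma zsub_length ss ks : length ss = length ks -> length (zsub ss ks) = length ks.
Proof. revert ks; induction ss; intros [|k ks]; simpl; intros; try lia; f_equal; auto. Qed.

Lemma zsubK ss ks : length ss = length ks -> zsub ss (zsub ss ks) = ks.
Proof. revert ks; induction ss; intros [|k ks]; simpl; intros; try lia; auto; f_equal; [lia | auto]. Qed.

(* [yz z] is the point (1/z_n, ..., 1/z_1): inversion reverses the order of the moduli. *)
Definition yz (z : list CC) : list CC := rev (map Cinv z).

Lemma monom_rcons l m x k : length l = length m ->
  monom (l ++ [x]) (m ++ [k]) = Cmul (monom l m) (Cpowz x k).
Proof.
  revert m; induction l; intros [|j m]; simpl; intros; try lia; [ring | rewrite IHl by lia; ring].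
Qed.

Lemma monom_rev l m : length l = length m -> monom (rev l) (rev m) = monom l m.
Proof.
  revert m; induction l; intros [|j m]; simpl; intros; try lia; auto.
  rewrite monom_rcons by (rewrite !length_rev; lia); rewrite IHl by lia; ring.
Qed.

Lemma monom_shift z ss ks :
  Forall (fun x => x <> C0) z -> length z = length ss -> length ss = length ks ->
  monom z ks = Cmul (monom z ss) (monom (map Cinv z) (zsub ss ks)).
Proof.
  revert ss ks; induction z as [|x z IHz]; intros [|s ss] [|k ks]; simpl; intros H H1 H2;
    try lia; [ring|].
  inversion H; subst; rewrite CpowzV, (IHz ss ks) by (auto; lia).
  replace k with (s + - (s - k))%Z at 1 by lia; rewrite CpowzD by auto; ring.
Qed.

Lemma monom_yz z ss ks :
  Forall (fun x => x <> C0) z -> length z = length ss -> length ss = length ks ->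
  monom z ks = Cmul (monom z ss) (monom (yz z) (rev (zsub ss ks))).
Proof.
  intros; unfold yz; rewrite monom_rev by (rewrite length_map, zsub_length; lia).
  apply monom_shift; auto.
Qed.

Definition prod_vars (n : nat) (z : list CC) : CC := prodC (map (zz z) (seq 0 n)).
Definition prod_diffs (n : nat) (z : list CC) : CC :=
  prodC (map (fun ij => Csub (zz z (fst ij)) (zz z (snd ij))) (pairs_lt n)).

Lemma in_pairs_lt n i j : In (i, j) (pairs_lt n) <-> (i < j < n)%nat.
Proof.
  unfold pairs_lt; rewrite in_flat_map; split.
  - intros [x [Hx Hy]]; apply in_map_iff in Hy as [y [E Hy]]; injection E; intros; subst.
    apply in_seq in Hx; apply in_seq in Hy; lia.
  - intros H; exists i; split; [apply in_seq; lia|].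
    apply in_map_iff; exists j; split; auto; apply in_seq; lia.
Qed.

Lemma zz_overflow z i : (length z <= i)%nat -> zz z i = C0.
Proof. intro; apply nth_overflow; auto. Qed.

Lemma pole_den_split n N z :
  pole_den n N z = Cmul (Cpow (prod_vars n z) N) (Cpow (prod_diffs n z) N).
Proof. unfold pole_den, prod_vars, prod_diffs; rewrite <- !prodC_Cpow, !map_map; reflexivity. Qed.

Lemma prod_vars_neq0 n z : off_poles n z -> prod_vars n z <> C0.
Proof.
  intros [_ [H _]]; apply prodC_neq0, Forall_forall; intros x Hx.
  apply in_map_iff in Hx as [i [<- Hi]]; apply in_seq in Hi; apply H; lia.
Qed.

Lemma prod_diffs_neq0 n z : off_poles n z -> prod_diffs n z <> C0.
Proof.
  intros [_ [_ H]]; apply prodC_neq0, Forall_forall; intros x Hx.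
  apply in_map_iff in Hx as [[i j] [<- Hij]]; apply in_pairs_lt in Hij.
  intro E; apply (H i j); try lia; apply Csub_eq0; auto.
Qed.

Lemma pole_den_neq0 n N z : off_poles n z -> pole_den n N z <> C0.
Proof.
  intro H; rewrite pole_den_split.
  apply Cmul_neq0; apply Cpow_neq0; [apply prod_vars_neq0 | apply prod_diffs_neq0]; auto.
Qed.

(* Adding exponent vectors; the shorter vector is padded with zeros. *)
Fixpoint addexp (e1 e2 : list nat) : list nat :=
  match e1, e2 with
  | a :: e, b :: f => (a + b)%nat :: addexp e f
  | [], _ => e2
  | _, [] => e1
  end.

Definition pmul (P Q : mpoly) : mpoly :=
  flat_map (fun t => map (fun s => (Cmul (fst t) (fst s), addexp (snd t) (snd s))) Q) P.

Lemma monom_nat_nil z : monom_nat z [] = C1.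
Proof. destruct z; reflexivity. Qed.

Lemma monom_natD z e1 e2 : monom_nat z (addexp e1 e2) = Cmul (monom_nat z e1) (monom_nat z e2).
Proof.
  revert e1 e2; induction z as [|x z IHz]; intros [|a e] [|b f]; simpl; try ring.
  rewrite IHz, CpowD; ring.
Qed.

Lemma monom_nat_var z i : (i < length z)%nat -> monom_nat z (repeat 0%nat i ++ [1%nat]) = zz z i.
Proof.
  revert z; induction i; intros [|x z] H; simpl in *; try lia.
  - rewrite monom_nat_nil; unfold zz; simpl; ring.
  - rewrite IHi by lia; unfold zz; simpl; ring.
Qed.

Lemma monom_nat_prod z e :
  monom_nat z e = prodC (map (fun i => Cpow (zz z i) (nth i e 0%nat)) (seq 0 (length z))).
Proof.
  revert e; induction z as [|x z IH]; intros [|a e]; simpl; auto.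
  - rewrite prodC_map1; [ring | intros [|i] _; reflexivity].
  - rewrite IH, <- seq_shift, map_map; reflexivity.
Qed.

Lemma peval_app P Q z : peval (P ++ Q) z = Cadd (peval P z) (peval Q z).
Proof. unfold peval; rewrite map_app, sumC_app; reflexivity. Qed.

Lemma peval_mul P Q z : peval (pmul P Q) z = Cmul (peval P z) (peval Q z).
Proof.
  induction P as [|t P IH]; [unfold peval; simpl; ring|].
  unfold pmul; cbn [flat_map]; rewrite peval_app; fold (pmul P Q); rewrite IH.
  replace (peval (map _ Q) z) with (Cmul (Cmul (fst t) (monom_nat z (snd t))) (peval Q z)).
  - change (peval (t :: P) z) with (Cadd (Cmul (fst t) (monom_nat z (snd t))) (peval P z)); ring.
  - unfold peval; rewrite map_map, sumC_mulr, map_map; f_equal; apply map_ext; intro s.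
    simpl; rewrite monom_natD; ring.
Qed.

(* Both notions only constrain the function off the poles; a Laurent polynomial is
   encoded as a polynomial divided by a power of z_1 ... z_n. *)
Definition polynomial_on (n : nat) (g : list CC -> CC) : Prop :=
  exists P : mpoly, forall z, off_poles n z -> g z = peval P z.

Definition laurent_on (n : nat) (g : list CC -> CC) : Prop :=
  exists M, polynomial_on n (fun z => Cmul (g z) (Cpow (prod_vars n z) M)).

Section PolynomialLaurent.
Variable n : nat.

Lemma polynomial_on_ext f g : polynomial_on n f ->
  (forall z, off_poles n z -> f z = g z) -> polynomial_on n g.
Proof. intros [P HP] H; exists P; intros z Hz; rewrite <- H; auto. Qed.

Lemma polynomial_on_const c : polynomial_on n (fun _ => c).
Proof. exists [(c, [])]; intros z _; unfold peval; simpl; rewrite monom_nat_nil; ring. Qed.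

Lemma polynomial_on_var i : polynomial_on n (fun z => zz z i).
Proof.
  destruct (Nat.lt_ge_cases i n).
  - exists [(C1, repeat 0%nat i ++ [1%nat])]; intros z [Hl _]; unfold peval; simpl.
    rewrite monom_nat_var by lia; ring.
  - exists [(C0, [])]; intros z [Hl _]; unfold peval; simpl; rewrite zz_overflow by lia; ring.
Qed.

Lemma polynomial_onD f g : polynomial_on n f -> polynomial_on n g ->
  polynomial_on n (fun z => Cadd (f z) (g z)).
Proof. intros [P HP] [Q HQ]; exists (P ++ Q); intros; rewrite peval_app, HP, HQ; auto. Qed.

Lemma polynomial_onM f g : polynomial_on n f -> polynomial_on n g ->
  polynomial_on n (fun z => Cmul (f z) (g z)).
Proof. intros [P HP] [Q HQ]; exists (pmul P Q); intros; rewrite peval_mul, HP, HQ; auto. Qed.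

Lemma polynomial_on_prod {A} (F : A -> list CC -> CC) l :
  (forall x, In x l -> polynomial_on n (F x)) ->
  polynomial_on n (fun z => prodC (map (fun x => F x z) l)).
Proof.
  induction l; simpl; intros; [apply polynomial_on_const | apply polynomial_onM; auto].
Qed.

Lemma polynomial_on_pow f N : polynomial_on n f -> polynomial_on n (fun z => Cpow (f z) N).
Proof.
  intro H; induction N; simpl; [apply polynomial_on_const | apply polynomial_onM; auto].
Qed.

Lemma polynomial_onB f g : polynomial_on n f -> polynomial_on n g ->
  polynomial_on n (fun z => Csub (f z) (g z)).
Proof.
  intros Hf Hg; eapply polynomial_on_ext.
  - apply polynomial_onD; [exact Hf|].
    apply polynomial_onM; [apply (polynomial_on_const (Copp C1)) | exact Hg].
  - intros; unfold Csub; f_equal; ring.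
Qed.

Lemma polynomial_on_prod_vars : polynomial_on n (prod_vars n).
Proof. apply (polynomial_on_prod (fun i z => zz z i)); intros; apply polynomial_on_var. Qed.

Lemma polynomial_on_prod_diffs : polynomial_on n (prod_diffs n).
Proof.
  apply (polynomial_on_prod (fun ij z => Csub (zz z (fst ij)) (zz z (snd ij)))).
  intros; apply polynomial_onB; apply polynomial_on_var.
Qed.

Lemma polynomial_on_pole_den N : polynomial_on n (pole_den n N).
Proof.
  eapply polynomial_on_ext.
  - apply polynomial_onM; apply polynomial_on_pow;
      [apply polynomial_on_prod_vars | apply polynomial_on_prod_diffs].
  - intros; rewrite pole_den_split; reflexivity.
Qed.

Lemma laurent_on_ext f g : laurent_on n f ->
  (forall z, off_poles n z -> f z = g z) -> laurent_on n g.
Proof.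
  intros [M HM] H; exists M; eapply polynomial_on_ext; [exact HM|].
  intros; cbv beta; rewrite H; auto.
Qed.

Lemma laurent_of_polynomial f : polynomial_on n f -> laurent_on n f.
Proof. intro H; exists 0%nat; eapply polynomial_on_ext; [exact H | intros; simpl; ring]. Qed.

Lemma laurent_onD f g : laurent_on n f -> laurent_on n g -> laurent_on n (fun z => Cadd (f z) (g z)).
Proof.
  intros [M1 H1] [M2 H2]; exists (M1 + M2)%nat; eapply polynomial_on_ext.
  - pose proof (fun M => polynomial_on_pow _ M polynomial_on_prod_vars) as Hpow.
    apply polynomial_onD; apply polynomial_onM;
      [exact H1 | apply (Hpow M2) | exact H2 | apply (Hpow M1)].
  - intros; cbv beta; rewrite CpowD; ring.
Qed.

Lemma laurent_onM f g : laurent_on n f -> laurent_on n g -> laurent_on n (fun z => Cmul (f z) (g z)).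
Proof.
  intros [M1 H1] [M2 H2]; exists (M1 + M2)%nat; eapply polynomial_on_ext.
  - apply polynomial_onM; [exact H1 | exact H2].
  - intros; cbv beta; rewrite CpowD; ring.
Qed.

Lemma laurent_on_inv_var i : laurent_on n (fun z => Cinv (zz z i)).
Proof.
  destruct (Nat.lt_ge_cases i n) as [Hi|Hi].
  - assert (Hin : In i (seq 0 n)) by (apply in_seq; lia).
    destruct (in_split _ _ Hin) as [l1 [l2 E]].
    exists 1%nat; eapply polynomial_on_ext.
    + apply (polynomial_on_prod (fun j z => zz z j) (l1 ++ l2)); intros; apply polynomial_on_var.
    + intros z Hz; assert (zz z i <> C0) by (apply Hz; auto).
      unfold prod_vars; rewrite E, !map_app, !prodC_app; simpl.
      change (fun x => zz z x) with (zz z); field; auto.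
  - apply laurent_of_polynomial; eapply polynomial_on_ext; [apply (polynomial_on_const C0)|].
    intros z [Hl _]; rewrite zz_overflow, Cinv_C0 by lia; reflexivity.
Qed.

Lemma laurent_on_const c : laurent_on n (fun _ => c).
Proof. apply laurent_of_polynomial, polynomial_on_const. Qed.

Lemma laurent_on_var i : laurent_on n (fun z => zz z i).
Proof. apply laurent_of_polynomial, polynomial_on_var. Qed.

Lemma laurent_onB f g : laurent_on n f -> laurent_on n g -> laurent_on n (fun z => Csub (f z) (g z)).
Proof.
  intros Hf Hg; eapply laurent_on_ext.
  - apply laurent_onD; [exact Hf | apply laurent_onM; [apply (laurent_on_const (Copp C1)) | exact Hg]].
  - intros; unfold Csub; f_equal; ring.
Qed.

Lemma laurent_on_pow f N : laurent_on n f -> laurent_on n (fun z => Cpow (f z) N).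
Proof. intro H; induction N; simpl; [apply laurent_on_const | apply laurent_onM; auto]. Qed.

Lemma laurent_on_prod {A} (F : A -> list CC -> CC) l :
  (forall x, In x l -> laurent_on n (F x)) -> laurent_on n (fun z => prodC (map (fun x => F x z) l)).
Proof. induction l; simpl; intros; [apply laurent_on_const | apply laurent_onM; auto]. Qed.

Lemma laurent_on_sum {A} (F : A -> list CC -> CC) l :
  (forall x, In x l -> laurent_on n (F x)) -> laurent_on n (fun z => sumC (map (fun x => F x z) l)).
Proof. induction l; simpl; intros; [apply laurent_on_const | apply laurent_onD; auto]. Qed.

Lemma laurent_on_monom ks : laurent_on n (fun z => monom z ks).
Proof.
  assert (E : forall z, monom z ks =
    prodC (map (fun i => Cpowz (zz z i) (nth i ks 0%Z)) (seq 0 (length z)))).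
  { intro z; revert ks; induction z as [|x z IH]; intros [|a ks]; simpl; auto.
    - rewrite prodC_map1; [ring | intros [|i] _; reflexivity].
    - rewrite IH, <- seq_shift, map_map; reflexivity. }
  eapply laurent_on_ext.
  - apply (laurent_on_prod (fun i z => Cpowz (zz z i) (nth i ks 0%Z)) (seq 0 n)).
    intros i _; destruct (nth i ks 0%Z); simpl;
      [apply laurent_on_const | apply laurent_on_pow, laurent_on_var
      | apply laurent_on_pow, laurent_on_inv_var].
  - intros z [Hl _]; rewrite E, Hl; reflexivity.
Qed.
End PolynomialLaurent.

(** * Rational functions and inversion of the variables *)

Section Rational.
Variable n : nat.

Lemma rational_poles_of_laurent N f :
  laurent_on n (fun z => Cmul (f z) (pole_den n N z)) -> rational_poles n f.
Proof.
  intros [M HM].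
  destruct (polynomial_onM n _ _ HM (polynomial_on_pow n _ M (polynomial_on_prod_diffs n)))
    as [P HP].
  exists P, (N + M)%nat; intros z Hz; rewrite <- HP by auto.
  pose proof (prod_vars_neq0 n z Hz); pose proof (prod_diffs_neq0 n z Hz).
  unfold Cdiv; rewrite !pole_den_split, !CpowD.
  field; repeat split; apply Cpow_neq0; auto.
Qed.

Lemma laurent_of_rational_poles f : rational_poles n f ->
  exists N, laurent_on n (fun z => Cmul (f z) (pole_den n N z)).
Proof.
  intros [P [N HP]]; exists N; apply laurent_of_polynomial; exists P.
  intros z Hz; rewrite HP by auto; unfold Cdiv; field; apply pole_den_neq0; auto.
Qed.

Lemma rational_poles_laurent h : laurent_on n h -> rational_poles n h.
Proof.
  intro H; apply (rational_poles_of_laurent 0); eapply laurent_on_ext; [exact H|].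
  intros z _; cbv beta; rewrite pole_den_split; simpl; ring.
Qed.

Lemma rational_polesD f g : rational_poles n f -> rational_poles n g ->
  rational_poles n (fun z => Cadd (f z) (g z)).
Proof.
  intros Hf Hg.
  destruct (laurent_of_rational_poles f Hf) as [N1 H1], (laurent_of_rational_poles g Hg) as [N2 H2].
  apply (rational_poles_of_laurent (N1 + N2)); eapply laurent_on_ext.
  - pose proof (fun N => laurent_of_polynomial n _ (polynomial_on_pole_den n N)) as Hden.
    apply laurent_onD; apply laurent_onM; [exact H1 | apply (Hden N2) | exact H2 | apply (Hden N1)].
  - intros z _; cbv beta; rewrite !pole_den_split, !CpowD; ring.
Qed.

Lemma rational_poles_laurentM h f : laurent_on n h -> rational_poles n f ->
  rational_poles n (fun z => Cmul (h z) (f z)).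
Proof.
  intros Hh Hf; destruct (laurent_of_rational_poles f Hf) as [N HN].
  apply (rational_poles_of_laurent N); eapply laurent_on_ext; [apply (laurent_onM n _ _ Hh HN)|].
  intros; cbv beta; ring.
Qed.

Lemma zz_yz z i : length z = n -> (i < n)%nat -> zz (yz z) i = Cinv (zz z (n - 1 - i)).
Proof.
  intros Hl Hi; unfold zz, yz; rewrite rev_nth by (rewrite length_map; lia).
  rewrite length_map, nth_indep with (d' := Cinv C0) by (rewrite length_map; lia).
  rewrite map_nth; do 2 f_equal; lia.
Qed.

Lemma off_poles_yz z : off_poles n z -> off_poles n (yz z).
Proof.
  intros [Hl [H1 H2]]; split; [|split].
  - unfold yz; rewrite length_rev, length_map; auto.
  - intros i Hi; rewrite zz_yz by auto; apply Cinv_neq0, H1; lia.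
  - intros i j Hij Hj; rewrite !zz_yz by (auto; lia); intro E; apply Cinv_inj in E.
    apply (H2 (n - 1 - j)%nat (n - 1 - i)%nat); auto; lia.
Qed.

Lemma dec_region_yz z : dec_region n z -> dec_region n (yz z).
Proof.
  intros [Hl [H1 H2]]; split; [|split].
  - unfold yz; rewrite length_rev, length_map; auto.
  - intros i Hi; rewrite zz_yz, CnormV by auto; apply Rinv_0_lt_compat, H1; lia.
  - intros i Hi; rewrite !zz_yz, !CnormV by (auto; lia).
    apply Rinv_lt_contravar; [apply Rmult_lt_0_compat; apply H1; lia|].
    replace (n - 1 - i)%nat with (S (n - 1 - S i)) by lia; apply H2; lia.
Qed.

Lemma laurent_on_peval_yz P : laurent_on n (fun z => peval P (yz z)).
Proof.
  eapply laurent_on_ext.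
  - apply (laurent_on_sum n (fun t z => Cmul (fst t)
      (prodC (map (fun i => Cpow (Cinv (zz z (n - 1 - i))) (nth i (snd t) 0%nat)) (seq 0 n))))).
    intros t _; apply laurent_onM; [apply laurent_on_const|].
    apply (laurent_on_prod n (fun i z => Cpow (Cinv (zz z (n - 1 - i))) (nth i (snd t) 0%nat))).
    intros; apply laurent_on_pow, laurent_on_inv_var.
  - intros z [Hl _]; unfold peval; f_equal; apply map_ext; intro t; f_equal.
    rewrite monom_nat_prod; unfold yz at 2; rewrite length_rev, length_map, Hl.
    f_equal; apply map_ext_in; intros i Hi; apply in_seq in Hi; rewrite zz_yz by (auto; lia).
    reflexivity.
Qed.

Lemma laurent_on_inv_prod_vars_yz : laurent_on n (fun z => Cinv (prod_vars n (yz z))).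
Proof.
  eapply laurent_on_ext.
  - apply (laurent_on_prod n (fun i z => zz z (n - 1 - i)) (seq 0 n)); intros; apply laurent_on_var.
  - intros z [Hl _]; unfold prod_vars; rewrite prodC_Cinv, map_map.
    f_equal; apply map_ext_in; intros i Hi; apply in_seq in Hi.
    rewrite zz_yz, CinvK by (auto; lia); reflexivity.
Qed.

(* The factor z_i - z_j at the point [yz z] is, up to the Laurent monomial
   1/(z_a z_b), the factor z_a - z_b of [prod_diffs n z] at the reflected pair
   a = n-1-j < b = n-1-i. *)
Lemma laurent_on_inv_diff_yz i j : In (i, j) (pairs_lt n) ->
  laurent_on n (fun z => Cmul (Cinv (Csub (zz (yz z) i) (zz (yz z) j))) (prod_diffs n z)).
Proof.
  intro Hij; apply in_pairs_lt in Hij.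
  set (a := (n - 1 - j)%nat); set (b := (n - 1 - i)%nat).
  assert (Hab : In (a, b) (pairs_lt n)) by (apply in_pairs_lt; lia).
  destruct (in_split _ _ Hab) as [l1 [l2 E]].
  eapply laurent_on_ext.
  - apply laurent_onM; [apply laurent_onM; [apply (laurent_on_var n a) | apply (laurent_on_var n b)]|].
    apply (laurent_on_prod n (fun ij z => Csub (zz z (fst ij)) (zz z (snd ij))) (l1 ++ l2)).
    intros; apply laurent_onB; apply laurent_on_var.
  - intros z [Hl [H1 H2]]; cbv beta.
    unfold prod_diffs; rewrite E, !map_app, !prodC_app; cbn [map fst snd].
    change (prodC (?x :: ?l)) with (Cmul x (prodC l)).
    rewrite !zz_yz by (auto; lia); fold a b.
    assert (Ha : zz z a <> C0) by (apply H1; lia).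
    assert (Hb : zz z b <> C0) by (apply H1; lia).
    assert (Hd : Csub (zz z a) (zz z b) <> C0)
      by (intro Q; apply (H2 a b); try lia; apply Csub_eq0; auto).
    replace (Csub (Cinv (zz z b)) (Cinv (zz z a)))
      with (Cmul (Csub (zz z a) (zz z b)) (Cinv (Cmul (zz z a) (zz z b)))) by (field; auto).
    rewrite CinvM, CinvK; field; auto.
Qed.

Lemma laurent_on_inv_prod_diffs_yz :
  laurent_on n (fun z =>
    Cmul (Cinv (prod_diffs n (yz z))) (Cpow (prod_diffs n z) (length (pairs_lt n)))).
Proof.
  eapply laurent_on_ext.
  - apply (laurent_on_prod n (fun ij z => Cmul (Cinv (Csub (zz (yz z) (fst ij)) (zz (yz z) (snd ij))))
                                              (prod_diffs n z)) (pairs_lt n)).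
    intros [i j] Hij; apply laurent_on_inv_diff_yz; auto.
  - intros z _; cbv beta; rewrite prodC_mapM, prodC_const; f_equal.
    unfold prod_diffs; rewrite prodC_Cinv, map_map; reflexivity.
Qed.
Lemma rational_poles_yz g : rational_poles n g -> rational_poles n (fun z => g (yz z)).
Proof.
  intros [P [N HP]]; set (K := length (pairs_lt n)).
  apply (rational_poles_of_laurent (K * N)); eapply laurent_on_ext.
  - apply laurent_onM; apply laurent_onM.
    + apply (laurent_on_peval_yz P).
    + exact (laurent_on_pow n _ N laurent_on_inv_prod_vars_yz).
    + exact (laurent_on_pow n _ N laurent_on_inv_prod_diffs_yz).
    + exact (laurent_on_pow n _ (K * N) (laurent_of_polynomial n _ (polynomial_on_prod_vars n))).
  - intros z Hz; cbv beta; rewrite HP by (apply off_poles_yz; auto).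
    unfold Cdiv; rewrite !pole_den_split, CinvM, (CpowM (prod_diffs n z)), CpowMn, <- !CpowV.
    fold K; ring.
Qed.
End Rational.

Definition has_rational_sum (n : nat) (c : list Z -> CC) : Prop :=
  exists f, rational_poles n f /\ forall z, dec_region n z -> mseries_conv n c z (f z).

Section RationalSum.
Variable n : nat.

Lemma has_rational_sum_ext c d : has_rational_sum n c ->
  (forall ks, length ks = n -> c ks = d ks) -> has_rational_sum n d.
Proof.
  intros [f [Hf Hs]] H; exists f; split; auto; intros z Hz.
  eapply abs_summable_to_ext; [apply Hs; auto|]; intros; cbv beta; rewrite H; auto.
Qed.

Lemma has_rational_sum0 : has_rational_sum n (fun _ => C0).
Proof.
  exists (fun _ => C0); split; [apply rational_poles_laurent, laurent_on_const|].
  intros z _; eapply abs_summable_to_ext; [apply abs_summable_to0 | intros; cbv beta; ring].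
Qed.

Lemma has_rational_sumD c d : has_rational_sum n c -> has_rational_sum n d ->
  has_rational_sum n (fun ks => Cadd (c ks) (d ks)).
Proof.
  intros [f [Hf Hfs]] [g [Hg Hgs]]; exists (fun z => Cadd (f z) (g z)).
  split; [apply rational_polesD; auto|]; intros z Hz.
  eapply abs_summable_to_ext; [apply abs_summable_toD; [apply Hfs | apply Hgs]; auto|].
  intros; cbv beta; ring.
Qed.

Lemma has_rational_sumZ a c : has_rational_sum n c -> has_rational_sum n (fun ks => Cmul a (c ks)).
Proof.
  intros [f [Hf Hfs]]; exists (fun z => Cmul a (f z)).
  split; [apply rational_poles_laurentM; [apply laurent_on_const | auto]|]; intros z Hz.
  eapply abs_summable_to_ext; [apply abs_summable_toZ, Hfs; auto|].
  intros; cbv beta; ring.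
Qed.

Lemma has_rational_sum_sum {A} (c : A -> list Z -> CC) l :
  (forall x, In x l -> has_rational_sum n (c x)) ->
  has_rational_sum n (fun ks => sumC (map (fun x => c x ks) l)).
Proof.
  induction l; simpl; intros H; [apply has_rational_sum0 | apply has_rational_sumD; auto].
Qed.

Lemma has_rational_sum_reflect c ss : length ss = n -> has_rational_sum n c ->
  has_rational_sum n (fun ks => c (rev (zsub ss ks))).
Proof.
  intros Hss [g [Hg Hgs]]; exists (fun z => Cmul (monom z ss) (g (yz z))); split.
  - apply rational_poles_laurentM; [apply laurent_on_monom | apply rational_poles_yz; auto].
  - intros z Hz; eapply abs_summable_to_ext.
    + apply abs_summable_toZ.
      apply (abs_summable_to_reindex n (fun k => Cmul (c k) (monom (yz z) k)) (g (yz z))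
               (fun ks => rev (zsub ss ks)) (fun js => zsub ss (rev js))).
      * intros k Hk; rewrite length_rev, zsub_length, rev_involutive, zsubK by lia; auto.
      * intros k Hk.
        rewrite zsub_length, zsubK, rev_involutive, length_rev by (rewrite ?length_rev; lia).
        auto.
      * apply Hgs, dec_region_yz; auto.
    + intros ks Hks; cbv beta; destruct Hz as [Hzl [Hz' _]].
      rewrite (monom_yz z ss ks); [ring | | lia | lia].
      apply Forall_forall; intros x Hx; destruct (In_nth _ _ C0 Hx) as [i [Hi <-]].
      apply Cnorm_gt0_neq0, Hz'; lia.
Qed.
End RationalSum.

(** * Expansion of the opposite vertex operators *)

(* The summands of [Yo]: the weight p of a homogeneous component of u and the
   power m of L_V(1) applied to it. *)
Definition Yo_terms (V : mosva_data) (u : mV V) : list (Z * nat) :=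
  flat_map (fun p => map (fun m => (p, m)) (seq 0 (S (Z.to_nat (p - mlow V)))))
    (supp (mgr V) u).
Definition Yo_coef (t : Z * nat) : CC := Cmul (signZ (fst t)) (RtoC (/ INR (fact (snd t)))).
Definition Yo_vec (V : mosva_data) (u : mV V) (t : Z * nat) : mV V :=
  Nat.iter (snd t) (mL_1 V) (proj (mgr V) (fst t) u).
Definition Yo_shift (t : Z * nat) : Z := (Z.of_nat (snd t) - 2 * fst t)%Z.

Lemma Yo_as_sum V W u w k :
  Yo V W u w k =
  vsum (map (fun t => vscal (Yo_coef t) (wY W (Yo_vec V u t) w (Yo_shift t - k)%Z)) (Yo_terms V u)).
Proof.
  unfold Yo, Yo_terms; induction (supp (mgr V) u) as [|p ps IH]; [reflexivity|].
  cbn [flat_map]; rewrite map_app, !vsum_app, IH, map_map.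
  f_equal; f_equal; apply map_ext; intro m; unfold Yo_coef, Yo_vec, Yo_shift; simpl.
  do 2 f_equal; lia.
Qed.

Lemma prodYo_rev_as_sum V W (HlinW : forall u k, linear (fun w => wY W u w k))
    (us : list (mV V)) :
  exists L : list (CC * list (mV V) * list Z),
    Forall (fun t => length (snd (fst t)) = length us /\ length (snd t) = length us) L /\
    forall w ks, length ks = length us ->
      prodYo_rev V W us ks w =
      vsum (map (fun t => vscal (fst (fst t))
                   (prodY (wY W) (snd (fst t)) (rev (zsub (snd t) ks)) w)) L).
Proof.
  induction us as [|u us IH].
  - exists [(C1, [], [])]; split; [repeat constructor|].
    intros w [|] H; simpl in *; try lia; rewrite vscal1, vaddr0; reflexivity.
  - destruct IH as [L [HL HE]].
    exists (flat_map (fun t => map (fun q => (Cmul (fst (fst t)) (Yo_coef q),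
              snd (fst t) ++ [Yo_vec V u q], Yo_shift q :: snd t)) (Yo_terms V u)) L).
    rewrite Forall_forall in HL; split.
    + apply Forall_forall; intros x Hx; apply in_flat_map in Hx as [t [Ht Hx]].
      apply in_map_iff in Hx as [q [<- Hq]]; simpl; rewrite length_app.
      destruct (HL t Ht); simpl; lia.
    + intros w [|k ks] Hl; simpl in Hl; try lia; simpl prodYo_rev.
      rewrite HE by lia; rewrite vsum_flat_map; f_equal; apply map_ext_in; intros t Ht.
      destruct (HL t Ht) as [H1 H2].
      rewrite Yo_as_sum, linear_vsum, vscal_sum by (apply prodY_linear; auto).
      rewrite !map_map; f_equal; apply map_ext; intro q; simpl.
      rewrite (proj2 (prodY_linear _ HlinW _ _)), vscalA, prodY_rcons; auto.
      rewrite length_rev, zsub_length; lia.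
Qed.

Theorem mainTheorem16 :
  forall (V : mosva_data) (W : lmod_data V),
    is_Mobius_MOSVA V ->
    is_Mobius_left_module V W ->
    forall (us : list (mV V)) (w : wW W) (w' : wW W -> CC),
      (1 <= length us)%nat ->
      gdual (wgr W) w' ->
      exists f : list CC -> CC,
        rational_poles (length us) f /\
        forall z : list CC, dec_region (length us) z ->
          mseries_conv (length us) (fun ks => w' (prodYo_rev V W us ks w)) z (f z).
Proof.
  intros V W _ [HW _] us w w' Hn Hw'.
  destruct HW as (_ & HlinW & _ & _ & _ & _ & _ & _ & _ & _ & _ & _ & Hrat & _).
  destruct (prodYo_rev_as_sum V W HlinW us) as [L [HL HE]].
  rewrite Forall_forall in HL.
  apply (has_rational_sum_ext _ (fun ks => sumC (map (fun t => Cmul (fst (fst t))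
           (w' (prodY (wY W) (snd (fst t)) (rev (zsub (snd t) ks)) w))) L))).
  - apply has_rational_sum_sum; intros t Ht; destruct (HL t Ht) as [H1 H2].
    apply has_rational_sumZ.
    apply (has_rational_sum_reflect _ (fun ks => w' (prodY (wY W) (snd (fst t)) ks w))); auto.
    rewrite <- H1; apply Hrat; auto; lia.
  - intros ks Hks; rewrite HE, (linearC_vsum w'), map_map by (auto; apply Hw').
    f_equal; apply map_ext; intro t; symmetry; apply (proj2 (proj1 Hw')).
Qed.
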